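(* The double Zarankiewicz number satisfies $z_2(m,2)=m+1$ for all $m\ge 2$, $z_2(2,n)=n+1$ for all $n\ge2$, $z_2(3,3)=6$, and $z_2(4,3)\ge 8> z(4,3)$.
   Context: The Zarankiewicz number $z(m,n)$ is the maximum number of edges of a bipartite graph with parts $[m]=\{1,\dots,m\}$ and $[n]$ containing no 4-cycle (equivalently, the maximum size of a set of cells of the $m\times n$ grid containing no four cells $(i,j),(i,l),(k,j),(k,l)$ with $i\ne k$, $j\ne l$). Double Zarankiewicz number: consider configurations $G=([m],[n],E_1\cup E_2)$ where $E_1\subseteq[m]\times[n]$ is a set of 1-edges (cells) and $E_2$ is a set of 2-edges $(i,j;k,l)$ with $i,k\in[m]$, $j,l\in[n]$, $i\ne k$, $j\ne l$; the cells $(i,j)$ and $(k,l)$ are the two halves of this 2-edge. Simplicity condition: the halves of all 2-edges are pairwise distinct cells and none of them belongs to $E_1$. A cell is occupied if it lies in $E_1$ or is a half of some 2-edge. $G$ contains a generalized $C_4$-cycle if (1) there are four 1-edges $(i,j),(i,l),(k,j),(k,l)\in E_1$ with $i\ne k$, $j\ne l$; or (2) there is a 2-edge $(i,j;k,l)\in E_2$ whose two opposite cells $(i,l)$ and $(k,j)$ are both occupied; or (3) there are a 2-edge $(i,j;p,q)\in E_2$ and a cell $(k,l)$ such that the five cells $(k,l),(k,j),(k,q),(i,l),(p,l)$ are pairwise distinct and all occupied. $z_2(m,n)$ is the maximum of $|E_1|+|E_2|$ over all such $G$ satisfying the simplicity condition and containing no generalized $C_4$-cycle. *)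

From mathcomp Require Import all_boot.
Set Implicit Arguments. Unset Strict Implicit. Unset Printing Implicit Defensive.

Definition cell (m n : nat) := ('I_m * 'I_n)%type.

(* A 2-edge (i,j;k,l) is represented as the ordered pair of its halves
   ((i,j),(k,l)).  *)
Definition twoedge (m n : nat) := (cell m n * cell m n)%type.

Section Defs.
Variables m n : nat.

Definition has_C4 (E1 : {set cell m n}) : bool :=
  [exists i : 'I_m, exists k : 'I_m, exists j : 'I_n, exists l : 'I_n,
    [&& i != k, j != l, (i, j) \in E1, (i, l) \in E1, (k, j) \in E1
      & (k, l) \in E1]].

Definition z : nat := \max_(E : {set cell m n} | ~~ has_C4 E) #|E|.

Definition wf_2edges (E2 : {set twoedge m n}) : bool :=
  [forall e in E2, (e.1.1 != e.2.1) && (e.1.2 != e.2.2)].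

Definition simple_conf (E1 : {set cell m n}) (E2 : {set twoedge m n}) : bool :=
  [forall e in E2, forall e' in E2, (e != e') ==>
      [&& e.1 != e'.1, e.1 != e'.2, e.2 != e'.1 & e.2 != e'.2]]
  && [forall e in E2, (e.1 \notin E1) && (e.2 \notin E1)].

Definition occupied (E1 : {set cell m n}) (E2 : {set twoedge m n}) (c : cell m n) : bool :=
  (c \in E1) || [exists e in E2, (e.1 == c) || (e.2 == c)].

(* Generalized C4-cycle, cases (1), (2), (3). *)
Definition has_gen_C4 (E1 : {set cell m n}) (E2 : {set twoedge m n}) : bool :=
  [|| has_C4 E1,
      [exists e in E2,
         occupied E1 E2 (e.1.1, e.2.2) && occupied E1 E2 (e.2.1, e.1.2)]
    | [exists e in E2, exists c : cell m n,
         let: ((i, j), (p, q)) := e in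
         let: (k, l) := c in
         let cs := [:: (k, l); (k, j); (k, q); (i, l); (p, l)] in
         uniq cs && all (occupied E1 E2) cs]].

Definition admissible (E1 : {set cell m n}) (E2 : {set twoedge m n}) : bool :=
  [&& wf_2edges E2, simple_conf E1 E2 & ~~ has_gen_C4 E1 E2].

Definition z2 : nat :=
  \max_(G : {set cell m n} * {set twoedge m n} | admissible G.1 G.2)
     (#|G.1| + #|G.2|).

End Defs.

(* A simple configuration occupies #|E1| + 2 #|E2| cells.  Row by row, a row that is not
   full has at most n - 1 occupied cells; at most one full row lies inside E1 (no C4), and
   every other full row contains a half of a 2-edge whose other row is not full (condition
   (2)), so there are at most 1 + #|E2| full rows and #|E1| + #|E2| <= m (n - 1) + 1.
   On a grid with at least three rows and columns, a 2-edge forces at least two unoccupied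
   cells: by (2) one of its opposite cells is a hole, and were it the only one, a third row
   and a third column would give the five occupied cells of (3); hence z2(3,3) <= 9 - 3.
   Without 2-edges, the pairs of columns met by distinct rows are disjoint, which gives
   z(m,n) <= m + C(n,2).  The lower bounds are explicit configurations, and z2 is
   symmetric under transposition. *)

From mathcomp Require Import all_boot zify.
Set Implicit Arguments. Unset Strict Implicit. Unset Printing Implicit Defensive.

Lemma card_sum_rows (T1 T2 : finType) (A : {set T1 * T2}) :
  #|A| = \sum_(x : T1) #|[set y | (x, y) \in A]|.
Proof.
rewrite -sum1_card (eq_bigr (fun x => \sum_(y | (x, y) \in A) 1)); last first.
  by move=> x _; rewrite sum1dep_card.
by rewrite pair_big_dep; apply: eq_bigl => -[x y].
Qed.

Lemma leq_bin2 d : d <= 1 + 'C(d, 2).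
Proof. by case: d => // d; rewrite binS bin1 add1n ltnS leq_addl. Qed.

Lemma leq_sum_card_disjoint (I T : finType) (P : I -> {set T}) (U : {set T}) :
  (forall i, P i \subset U) ->
  (forall i i' x, x \in P i -> x \in P i' -> i = i') ->
  \sum_i #|P i| <= #|U|.
Proof.
move=> PU Pdisj; set S := [set p : I * T | p.2 \in P p.1].
have -> : \sum_i #|P i| = #|S|.
  by rewrite card_sum_rows; apply: eq_bigr => i _; apply: eq_card => x; rewrite !inE.
rewrite -(card_in_imset (f := snd)); last first.
  move=> [i x] [i' x'] /[!inE] /= Hx Hx' /= xx'.
  by rewrite -xx' in Hx'; rewrite (Pdisj _ _ _ Hx Hx') xx'.
apply: subset_leq_card; apply/subsetP => _ /imsetP [[i x] /[!inE] /= Hx ->].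
exact: subsetP (PU i) _ Hx.
Qed.

Lemma cardsU_disjoint (T : finType) (A B : {set T}) :
  [disjoint A & B] -> #|A :|: B| = #|A| + #|B|.
Proof. by move=> AB; apply/eqP; rewrite (leq_card_setU A B). Qed.

Lemma exists_third (T : finType) (i p : T) : 2 < #|T| -> exists k, (k != i) && (k != p).
Proof.
move=> T_gt2; have /subsetPn [k _ k_ip] : ~~ ([set: T] \subset [set i; p]).
  apply: contraL T_gt2 => /subset_leq_card; rewrite cardsT cards2 -leqNgt.
  by move/leq_trans; apply; case: (i != p).
by exists k; rewrite !inE negb_or in k_ip.
Qed.

Section Zarankiewicz.
Variables m n : nat.

Lemma has_C4_intro (E : {set cell m n}) i k j l :
  i != k -> j != l -> (i, j) \in E -> (i, l) \in E -> (k, j) \in E -> (k, l) \in E ->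
  has_C4 E.
Proof.
move=> ik jl ij il kj kl; apply/existsP; exists i; apply/existsP; exists k.
by apply/existsP; exists j; apply/existsP; exists l; rewrite ik jl ij il kj kl.
Qed.

Lemma card_le_z (E : {set cell m n}) : ~~ has_C4 E -> #|E| <= z m n.
Proof. exact: (leq_bigmax_cond (F := fun E : {set cell m n} => #|E|)). Qed.

Lemma z_ub : z m n <= m + 'C(n, 2).
Proof.
apply/bigmax_leqP => E noC4.
pose D r := [set j | (r, j) \in E].
pose P r := [set B : {set 'I_n} | B \subset D r & #|B| == 2].
have -> : m + 'C(n, 2) = \sum_(r : 'I_m) 1 + #|[set B : {set 'I_n} | #|B| == 2]|.
  by rewrite card_draws sum1_card !card_ord.
rewrite card_sum_rows; apply: leq_trans (leq_add (leqnn _) (leq_sum_card_disjoint (P := P) _ _)).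
- rewrite -big_split /=; apply: leq_sum => r _.
  by rewrite cards_draws; apply: leq_bin2.
- by move=> r; apply/subsetP => B; rewrite !inE => /andP [].
move=> r r' B /[!inE] /andP [BDr /cards2P [j [l [jl defB]]]] /andP [BDr' _].
apply/eqP; apply: contraNT noC4 => rr'.
have inD s x : B \subset D s -> x \in [set j; l] -> (s, x) \in E.
  by rewrite defB => /subsetP /[apply]; rewrite inE.
by apply: (has_C4_intro rr' jl); apply: inD; rewrite // !inE eqxx ?orbT.
Qed.

Lemma simple_confP (E1 : {set cell m n}) (E2 : {set twoedge m n}) :
  simple_conf E1 E2 ->
  (forall e e', e \in E2 -> e' \in E2 -> e != e' ->
     [&& e.1 != e'.1, e.1 != e'.2, e.2 != e'.1 & e.2 != e'.2]) /\
  (forall e, e \in E2 -> (e.1 \notin E1) && (e.2 \notin E1)).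
Proof.
case/andP => /forall_inP distinct /forall_inP notE1; split => // e e' He He'.
exact/implyP/(forall_inP (distinct e He)).
Qed.

Lemma card_occupied_lb (E1 : {set cell m n}) (E2 : {set twoedge m n}) :
  wf_2edges E2 -> simple_conf E1 E2 ->
  #|E1| + #|E2| + #|E2| <= #|[set c | occupied E1 E2 c]|.
Proof.
move=> /forall_inP wf /simple_confP [distinct notE1].
set H1 := [set e.1 | e in E2]; set H2 := [set e.2 | e in E2].
have card_halves (h : twoedge m n -> cell m n) : h = fst \/ h = snd -> #|h @: E2| = #|E2|.
  move=> hE; apply: card_in_imset => e e' He He' hee'; apply: contraTeq isT => ee'.
  by have := distinct e e' He He' ee'; case: hE hee' => -> /= eqh; rewrite eqh eqxx ?andbF.
have H12 : [disjoint H1 & H2].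
  rewrite -setI_eq0; apply/set0Pn => -[_ /setIP [/imsetP [e He ->] /imsetP [e' He' ee']]].
  have [eq|] := eqVneq e e'; first by move: (wf e He); rewrite ee' -eq eqxx.
  by move/(distinct e e' He He'); rewrite ee' eqxx andbF.
have E1H : [disjoint E1 & H1 :|: H2].
  rewrite disjoint_sym disjoints_subset; apply/subsetP => c.
  by case/setUP => /imsetP [e He ->]; rewrite inE; have /andP [] := notE1 e He.
have [cH1 cH2] : #|H1| = #|E2| /\ #|H2| = #|E2| by split; apply: card_halves; [left|right].
rewrite -addnA -{1}cH1 -cH2 -!cardsU_disjoint //; apply: subset_leq_card.
apply/subsetP => c; rewrite !inE /occupied => /orP [-> //|/orP [] /imsetP [e He ->]];
  by apply/orP; right; apply/existsP; exists e; rewrite He eqxx ?orbT.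
Qed.

Lemma admissible_set0 (E : {set cell m n}) : ~~ has_C4 E -> admissible E set0.
Proof.
move=> noC4; apply/and3P; split.
- by apply/forall_inP => e; rewrite inE.
- by apply/andP; split; apply/forall_inP => e; rewrite inE.
rewrite /has_gen_C4 (negbTE noC4) /=; apply/norP; split; apply/negP => /existsP [e];
  by rewrite inE.
Qed.

Lemma card_le_z2 (E1 : {set cell m n}) (E2 : {set twoedge m n}) :
  admissible E1 E2 -> #|E1| + #|E2| <= z2 m n.
Proof.
exact: (leq_bigmax_cond (P := fun G : {set cell m n} * {set twoedge m n} => admissible G.1 G.2)
                        (F := fun G => #|G.1| + #|G.2|) (E1, E2)).
Qed.

Lemma z_le_z2 : z m n <= z2 m n.
Proof.
apply/bigmax_leqP => E noC4.
by have := card_le_z2 (admissible_set0 noC4); rewrite cards0 addn0.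
Qed.

Definition full_rows (E1 : {set cell m n}) (E2 : {set twoedge m n}) : {set 'I_m} :=
  [set r | [forall j, occupied E1 E2 (r, j)]].

Lemma card_occupied_ub (E1 : {set cell m n}) (E2 : {set twoedge m n}) :
  #|[set c | occupied E1 E2 c]| <= m * n.-1 + #|full_rows E1 E2|.
Proof.
set R := full_rows E1 E2.
apply: (@leq_trans (\sum_(r < m) (n.-1 + (r \in R)))).
  rewrite card_sum_rows; apply: leq_sum => r _; rewrite /R inE.
  case: forallP => [_|/forallP/forallPn [j free]].
    by rewrite addn1; apply: leq_trans (max_card _) _; rewrite card_ord leqSpred.
  rewrite addn0; apply: (@leq_trans #|[set~ j]|); last by rewrite cardsC1 card_ord.
  by apply/subset_leq_card/subsetP => l; rewrite !inE; apply: contraTneq => ->.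
rewrite big_split /= sum_nat_const card_ord leq_add2l -sum1_card [leqRHS]big_mkcond /=.
by apply: leq_sum => r _; case: (r \in R).
Qed.

Lemma card_full_rows_ub (E1 : {set cell m n}) (E2 : {set twoedge m n}) :
  1 < n -> admissible E1 E2 -> #|full_rows E1 E2| <= 1 + #|E2|.
Proof.
rewrite -[n in 1 < n]card_ord => /card_gt1P [j [l [_ _ jl]]].
case/and3P => _ _ /norP [noC4 /norP [no_opposite _]].
set R := full_rows E1 E2; set R1 := [set r | [forall j, (r, j) \in E1]].
have fullR r c : r \in R -> occupied E1 E2 (r, c) by rewrite inE => /forallP.
have R1_le1 : #|R :&: R1| <= 1.
  apply: leq_trans (subset_leq_card (subsetIr R R1)) _.
  apply/card_le1_eqP => r k /[!inE] /forallP rE1 /forallP kE1; apply/eqP.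
  by apply: contraNT noC4 => rk; apply: (has_C4_intro rk jl).
(* By (2), no 2-edge has both of its rows full. *)
pose row_in_R (e : twoedge m n) := if e.1.1 \in R then e.1.1 else e.2.1.
have R2_sub : R :\: R1 \subset row_in_R @: E2.
  apply/subsetP => r /setDP [rR]; rewrite inE => /forallPn [c /negPf rcE1].
  have := fullR r c rR; rewrite /occupied rcE1 => /existsP [e /andP [He e_c]].
  apply/imsetP; exists e; rewrite // /row_in_R.
  case/orP: e_c => /eqP ec; first by rewrite ec /= rR.
  case: ifP => [e1R|_]; last by rewrite ec.
  case/negP: no_opposite; apply/existsP; exists e.
  by rewrite He ec /= !fullR ?e1R.
rewrite -(cardsID R1) leq_add //.
exact: leq_trans (subset_leq_card R2_sub) (leq_imset_card _ _).
Qed.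

Lemma z2_ub : 1 < n -> z2 m n <= m * n.-1 + 1.
Proof.
move=> n_gt1; apply/bigmax_leqP => -[E1 E2] /= adm.
have /and3P [wf simple _] := adm.
rewrite -(leq_add2r #|E2|); apply: leq_trans (card_occupied_lb wf simple) _.
apply: leq_trans (card_occupied_ub E1 E2) _.
by rewrite -addnA leq_add2l card_full_rows_ub.
Qed.

Lemma unoccupied_gt1 (E1 : {set cell m n}) (E2 : {set twoedge m n}) e :
  2 < m -> 2 < n -> admissible E1 E2 -> e \in E2 ->
  1 < #|[set c | ~~ occupied E1 E2 c]|.
Proof.
move=> m_gt2 n_gt2 /and3P [/forall_inP wf _ noC4] He.
rewrite ltnNge; apply: contra noC4 => /card_le1_eqP U_le1.
case: e He (wf e He) => [[i j] [p q]] He /= /andP [ip jq].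
have [k /andP [ki kp]] : exists k, (k != i) && (k != p) by apply: exists_third; rewrite card_ord.
have [l /andP [lj lq]] : exists l, (l != j) && (l != q) by apply: exists_third; rewrite card_ord.
have [opp|] := boolP (occupied E1 E2 (i, q) && occupied E1 E2 (p, j)).
  by apply/or3P/Or32/existsP; exists ((i, j), (p, q)); rewrite He.
rewrite negb_and => hole.
have occ_off_hole c : c != (i, q) -> c != (p, j) -> occupied E1 E2 c.
  move=> ciq cpj; apply: contraT => free.
  have hole_unique x : ~~ occupied E1 E2 x -> c = x by move=> fx; apply: U_le1; rewrite inE.
  by case/orP: hole => /hole_unique ceq; rewrite ceq eqxx in ciq cpj.
apply/or3P/Or33/existsP; exists ((i, j), (p, q)); rewrite He /=; apply/existsP; exists (k, l).
rewrite /= !inE !occ_off_hole ?xpair_eqE ?(negbTE ki) ?(negbTE kp) ?(negbTE lj) ?(negbTE lq).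
all: by rewrite ?andbF ?eqxx ?(negbTE ip) ?(negbTE jq).
Qed.

Lemma card_admissible_ub (E1 : {set cell m n}) (E2 : {set twoedge m n}) :
  2 < m -> 2 < n -> admissible E1 E2 -> E2 != set0 -> #|E1| + #|E2| + 3 <= m * n.
Proof.
move=> m_gt2 n_gt2 adm /set0Pn [e He]; have /and3P [wf simple _] := adm.
have E2_gt0 : 0 < #|E2| by apply/card_gt0P; exists e.
have := unoccupied_gt1 m_gt2 n_gt2 adm He.
have -> : [set c | ~~ occupied E1 E2 c] = ~: [set c | occupied E1 E2 c].
  by apply/setP => c; rewrite !inE.
have := cardsC [set c | occupied E1 E2 c]; rewrite card_prod !card_ord.
have := card_occupied_lb wf simple.
lia.
Qed.
End Zarankiewicz.

Lemma z_m2_lb m : 0 < m -> m + 1 <= z m 2.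
Proof.
move=> m_gt0; pose r0 : 'I_m := Ordinal m_gt0.
pose E : {set cell m 2} := (r0, ord_max) |: [set (r, ord0) | r : 'I_m].
have col1 r : (r, ord_max) \in E -> r = r0.
  by case/setU1P => [[] //|/imsetP [r' _ []]].
have -> : m + 1 = #|E|.
  rewrite cardsU1 card_imset ?card_ord => [|r r' [] //].
  by case: imsetP => [[r _ []]|] //; rewrite addnC.
apply/card_le_z/negP => /existsP [i] /existsP [k] /existsP [j] /existsP [l].
case/and3P => ik jl /and4P [ij il kj kl].
have : (j == ord_max) || (l == ord_max).
  by move: jl (ltn_ord j) (ltn_ord l); rewrite -!val_eqE /=; lia.
by case/orP => /eqP c1; [move: ij kj | move: il kl]; rewrite c1 => /col1 ir0 /col1 kr0;
  rewrite ir0 kr0 eqxx in ik.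
Qed.

Lemma z33_lb : 6 <= z 3 3.
Proof.
pose D : {set cell 3 3} := [set (r, r) | r : 'I_3].
have inD x y : ((x, y) \in D) = (x == y).
  by apply/imsetP/eqP => [[r _ [-> ->]] //|->]; exists y.
have -> : 6 = #|~: D|.
  have := cardsC D; rewrite card_imset ?card_prod ?card_ord // => [|r r' []] //; lia.
apply/card_le_z/negP => /existsP [i] /existsP [k] /existsP [j] /existsP [l].
case/and3P => ik jl /and4P []; rewrite !inE !inD.
move: ik jl (ltn_ord i) (ltn_ord k) (ltn_ord j) (ltn_ord l); rewrite -!val_eqE /=; lia.
Qed.

Definition tr_cell {m n} (c : cell m n) : cell n m := (c.2, c.1).
Definition tr_edge {m n} (e : twoedge m n) : twoedge n m := (tr_cell e.1, tr_cell e.2).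

Lemma tr_cellK m n : cancel (@tr_cell m n) (@tr_cell n m). Proof. by case. Qed.
Lemma tr_edgeK m n : cancel (@tr_edge m n) (@tr_edge n m). Proof. by case=> [[? ?] [? ?]]. Qed.

Section Transpose.
Variables (m n : nat) (E1 : {set cell m n}) (E2 : {set twoedge m n}).
Let F1 : {set cell n m} := tr_cell @: E1.
Let F2 : {set twoedge n m} := tr_edge @: E2.

Lemma mem_tr_cells c : (c \in F1) = (tr_cell c \in E1).
Proof. by rewrite /F1 (can2_imset_pre _ (@tr_cellK m n) (@tr_cellK n m)) inE. Qed.

Lemma mem_tr_edges e : (e \in F2) = (tr_edge e \in E2).
Proof. by rewrite /F2 (can2_imset_pre _ (@tr_edgeK m n) (@tr_edgeK n m)) inE. Qed.

Lemma exists_tr_edges (P : pred (twoedge n m)) :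
  [exists e in F2, P e] = [exists e in E2, P (tr_edge e)].
Proof.
apply/existsP/existsP => -[e /andP [He Pe]]; exists (tr_edge e).
  by rewrite -mem_tr_edges tr_edgeK He.
by rewrite mem_tr_edges tr_edgeK He.
Qed.

Lemma occupied_tr c : occupied F1 F2 c = occupied E1 E2 (tr_cell c).
Proof.
rewrite /occupied mem_tr_cells exists_tr_edges; congr orb; apply: eq_existsb => e.
by rewrite /= !(can2_eq (@tr_cellK m n) (@tr_cellK n m)).
Qed.

Lemma admissible_tr : admissible E1 E2 -> admissible F1 F2.
Proof.
case/and3P => /forall_inP wf /simple_confP [distinct notE1] noC4; apply/and3P; split.
- by apply/forall_inP => -[[a b] [c d]]; rewrite mem_tr_edges => /wf; rewrite andbC.
- apply/andP; split; apply/forall_inP => e; rewrite mem_tr_edges => He.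
    apply/forall_inP => e'; rewrite mem_tr_edges => He'; apply/implyP => ee'.
    have := distinct _ _ He He'; rewrite (can_eq (@tr_edgeK n m)) => /(_ ee').
    by rewrite !(can_eq (@tr_cellK n m)).
  by rewrite !mem_tr_cells; apply: (notE1 _ He).
apply: contra noC4 => /or3P [/existsP [i] /existsP [k] /existsP [j] /existsP [l] | |].
- rewrite !mem_tr_cells => /and3P [ik jl /and4P [ij il kj kl]]; apply/orP; left.
  exact: (has_C4_intro jl ik).
- rewrite exists_tr_edges => /existsP [[[a b] [c d]] /and3P [He occ1 occ2]]; apply/or3P/Or32.
  move: occ1 occ2; rewrite !occupied_tr => occ1 occ2.
  by apply/existsP; exists ((a, b), (c, d)); rewrite He occ1 occ2.
rewrite exists_tr_edges => /existsP [[[a b] [c d]] /andP [He /existsP [[k l]]]].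
move=> /andP [uniq_cs occ_cs]; apply/or3P/Or33/existsP; exists ((a, b), (c, d)).
rewrite He; apply/existsP; exists (l, k).
set L := [:: (l, k); (l, b); (l, d); (a, k); (c, k)].
suff : uniq L && all (occupied E1 E2) L by [].
have perm : perm_eq L (map tr_cell [:: (k, l); (k, a); (k, c); (b, l); (d, l)]).
  by rewrite /= perm_cons (perm_catC [:: _; _] [:: _; _]).
rewrite (perm_uniq perm) (perm_all _ perm) (map_inj_uniq (can_inj (@tr_cellK n m))) uniq_cs.
by rewrite all_map; apply: sub_all occ_cs => x; rewrite /= occupied_tr.
Qed.
End Transpose.

Lemma z2_le_tr m n : z2 m n <= z2 n m.
Proof.
apply/bigmax_leqP => -[E1 E2] /= adm.
have := card_le_z2 (admissible_tr adm).
by rewrite !card_imset //; apply: can_inj; [apply: tr_edgeK | apply: tr_cellK].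
Qed.

Lemma z2C m n : z2 m n = z2 n m.
Proof. by apply/eqP; rewrite eqn_leq !z2_le_tr. Qed.

Local Notation "<| i , j |>" := ((@Ordinal 4 i isT, @Ordinal 3 j isT) : cell 4 3).

Definition E1_43 : {set cell 4 3} :=
  <|0, 1|> |: (<|0, 2|> |: (<|1, 2|> |: (<|2, 0|> |: (<|2, 1|> |: (<|3, 0|> |: [set <|3, 2|>]))))).
Definition e_43 : twoedge 4 3 := (<|0, 0|>, <|1, 1|>).
Definition E2_43 : {set twoedge 4 3} := [set e_43].

Lemma mem_E1_43 c : (c \in E1_43) =
  [|| c == <|0, 1|>, c == <|0, 2|>, c == <|1, 2|>, c == <|2, 0|>, c == <|2, 1|>,
      c == <|3, 0|> | c == <|3, 2|>].
Proof. by rewrite !inE. Qed.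

Lemma occupied_43 c : occupied E1_43 E2_43 c = [|| c \in E1_43, e_43.1 == c | e_43.2 == c].
Proof.
rewrite /occupied; congr orb; apply/existsP/idP => [[e /andP [/set1P -> //]]|ec].
by exists e_43; rewrite inE eqxx.
Qed.

Lemma ord4P (i : 'I_4) :
  [\/ i = Ordinal (isT : 0 < 4), i = Ordinal (isT : 1 < 4),
      i = Ordinal (isT : 2 < 4) | i = Ordinal (isT : 3 < 4)].
Proof.
case: i => [[|[|[|[|i]]]] Hi]; [apply: Or41 | apply: Or42 | apply: Or43 | apply: Or44 | by []];
  exact: val_inj.
Qed.

Lemma ord3P (j : 'I_3) :
  [\/ j = Ordinal (isT : 0 < 3), j = Ordinal (isT : 1 < 3) | j = Ordinal (isT : 2 < 3)].
Proof.
case: j => [[|[|[|j]]] Hj]; [apply: Or31 | apply: Or32 | apply: Or33 | by []]; exact: val_inj.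
Qed.

Lemma admissible_43 : admissible E1_43 E2_43.
Proof.
apply/and3P; split.
- by apply/forall_inP => e /set1P ->.
- apply/andP; split; apply/forall_inP => e /set1P ->; last by rewrite !mem_E1_43.
  by apply/forall_inP => e' /set1P ->; rewrite eqxx.
apply/or3P => -[].
- case/existsP => i /existsP [k] /existsP [j] /existsP [l].
  by case: (ord4P i) => ->; case: (ord4P k) => ->; case: (ord3P j) => ->; case: (ord3P l) => ->;
    rewrite !mem_E1_43.
- by case/existsP => e /andP [/set1P ->]; rewrite !occupied_43 !mem_E1_43.
case/existsP => e /andP [/set1P ->] /existsP [[k l]].
by case: (ord4P k) => ->; case: (ord3P l) => ->; rewrite /e_43 /= ?occupied_43 ?mem_E1_43.
Qed.

Lemma card_E1_43 : #|E1_43| = 7.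
Proof. by rewrite !cardsU1 cards1 !inE. Qed.

Lemma z2_m2 m : 0 < m -> z2 m 2 = m + 1.
Proof.
move=> m_gt0; apply/eqP; rewrite eqn_leq.
by rewrite (leq_trans (@z2_ub m 2 isT)) ?muln1 // (leq_trans (z_m2_lb m_gt0)) ?z_le_z2.
Qed.

Lemma z2_33 : z2 3 3 = 6.
Proof.
apply/eqP; rewrite eqn_leq (leq_trans z33_lb) ?z_le_z2 // andbT.
apply/bigmax_leqP => -[E1 E2] /= adm.
have [E2_0|E2_n0] := eqVneq E2 set0; last first.
  by rewrite -(leq_add2r 3) (@card_admissible_ub 3 3 E1 E2 isT isT adm E2_n0).
have /and3P [_ _ /norP [noC4 _]] := adm.
by rewrite E2_0 cards0 addn0 (leq_trans (card_le_z noC4)) ?z_ub.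
Qed.

Lemma z2_43_lb : 8 <= z2 4 3.
Proof. by have := card_le_z2 admissible_43; rewrite card_E1_43 cards1. Qed.

Theorem theorem2p3 :
  (forall m : nat, 2 <= m -> z2 m 2 = m + 1) /\
  (forall n : nat, 2 <= n -> z2 2 n = n + 1) /\
  z2 3 3 = 6 /\
  8 <= z2 4 3 /\ z 4 3 < 8.
Proof.
split; first by move=> m m_ge2; rewrite z2_m2 // ltnW.
split; first by move=> n n_ge2; rewrite z2C z2_m2 // ltnW.
by split; [exact: z2_33 | split; [exact: z2_43_lb | exact: leq_ltn_trans (z_ub 4 3) _]].
Qed.
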